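(* Let $M=I\times F_1\times F_2\times F_3$ with metric $g=-dt^2\oplus\phi^{2p_1}g_{F_1}\oplus\phi^{2p_2}g_{F_2}\oplus\phi^{2p_3}g_{F_3}$, where $I\subset\mathbb{R}$ is an open interval, $\phi:I\to(0,\infty)$ is smooth, $p_1,p_2,p_3\in\mathbb{R}$ with $p_i\neq p_j$ for some $i,j\in\{1,2,3\}$, and each $(F_i,g_{F_i})$ is a one-dimensional Riemannian manifold; let $\zeta=p_1+p_2+p_3$, $\eta=p_1^2+p_2^2+p_3^2$, and let $\overline\nabla$ be the semi-symmetric metric connection determined by $P=\frac{\partial}{\partial t}$. Then $(M,\overline\nabla)$ is Einstein with Einstein constant $\lambda$ if and only if $\lambda=0$, $\frac{2\eta}{\zeta^2}=1$, and $\phi=c_0e^{\frac{2t}{\zeta}}$ for a constant $c_0$.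
   Context: $\nabla$ is the Levi-Civita connection of $g$, $\pi(X)=g(X,P)$, and $\overline\nabla_XY=\nabla_XY+\pi(Y)X-g(X,Y)P$. Conventions: $\overline R(X,Y)Z=\overline\nabla_X\overline\nabla_YZ-\overline\nabla_Y\overline\nabla_XZ-\overline\nabla_{[X,Y]}Z$, $\overline{\mathrm{Ric}}(X,Y)=\sum_k\varepsilon_kg(\overline R(X,E_k)Y,E_k)$ for a local orthonormal frame $(E_k)$, $\varepsilon_k=g(E_k,E_k)$; Einstein with constant $\lambda$ means $\overline{\mathrm{Ric}}=\lambda g$. *)

From Stdlib Require Import Reals.
From Coquelicot Require Import Coquelicot.
Open Scope R_scope.

(* Local coordinates on M = I x F1 x F2 x F3:  x 0 = t,  x 1, x 2, x 3 =
   arc-length coordinates on the one-dimensional Riemannian manifolds F_i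
   (so g_{F_i} = dx_i^2).  A point is x : nat -> R, only x 0..x 3 matter. *)
Definition Pt := nat -> R.
Definition VF := Pt -> nat -> R.

Definition sum4 (f : nat -> R) : R := sum_f_R0 f 3.

Definition pd (a : nat) (f : Pt -> R) (x : Pt) : R :=
  Derive (fun s => f (fun i => if Nat.eqb i a then s else x i)) (x a).

Definition pvec (p1 p2 p3 : R) (i : nat) : R :=
  match i with 1%nat => p1 | 2%nat => p2 | _ => p3 end.

Definition gc (phi : R -> R) (p : nat -> R) (a b : nat) (x : Pt) : R :=
  if Nat.eqb a b then
    (if Nat.eqb a 0 then -1 else Rpower (phi (x 0%nat)) (2 * p a))
  else 0.

Definition gm phi p (u v : nat -> R) (x : Pt) : R :=
  sum4 (fun a => sum4 (fun b => gc phi p a b x * u a * v b)).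

(* Christoffel symbols of the Levi-Civita connection (metric is diagonal,
   so g^{cd} = delta_{cd} / g_{cc}) *)
Definition Gamma phi p (c a b : nat) (x : Pt) : R :=
  / (2 * gc phi p c c x) *
  (pd a (gc phi p b c) x + pd b (gc phi p a c) x - pd c (gc phi p a b) x).

Definition nablaLC phi p (X Y : VF) : VF := fun x c =>
  sum4 (fun a => X x a * pd a (fun y => Y y c) x) +
  sum4 (fun a => sum4 (fun b => Gamma phi p c a b x * X x a * Y x b)).

Definition Pf : VF := fun _ c => if Nat.eqb c 0 then 1 else 0.

Definition nablabar phi p (X Y : VF) : VF := fun x c =>
  nablaLC phi p X Y x c + gm phi p (Y x) (Pf x) x * X x c
  - gm phi p (X x) (Y x) x * Pf x c.

Definition bracket (X Y : VF) : VF := fun x c =>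
  sum4 (fun a => X x a * pd a (fun y => Y y c) x - Y x a * pd a (fun y => X y c) x).

Definition curv phi p (X Y Z : VF) : VF := fun x =>
  fun c => nablabar phi p X (nablabar phi p Y Z) x c
         - nablabar phi p Y (nablabar phi p X Z) x c
         - nablabar phi p (bracket X Y) Z x c.

Definition coord (a : nat) : VF := fun _ c => if Nat.eqb c a then 1 else 0.

Definition frame phi p (k : nat) : VF := fun x c =>
  if Nat.eqb c k then / sqrt (Rabs (gc phi p k k x)) else 0.

Definition epsk phi p (k : nat) (x : Pt) : R :=
  gm phi p (frame phi p k x) (frame phi p k x) x.

Definition Ricbar phi p (X Y : VF) (x : Pt) : R :=
  sum4 (fun k => epsk phi p k x *
                 gm phi p (curv phi p X (frame phi p k) Y x) (frame phi p k x) x).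

Definition inI (a b : Rbar) (t : R) : Prop := Rbar_lt a t /\ Rbar_lt t b.

(* Einstein with constant lambda (checked on coordinate fields; Ric is tensorial) *)
Definition Einstein (a b : Rbar) phi p (lambda : R) : Prop :=
  forall x : Pt, inI a b (x 0%nat) ->
  forall i j : nat, (i < 4)%nat -> (j < 4)%nat ->
    Ricbar phi p (coord i) (coord j) x = lambda * gc phi p i j x.

From Stdlib Require Import Reals Lia Lra FunctionalExtensionality.
From Coquelicot Require Import Coquelicot.
Open Scope R_scope.

(* All data depend on [t] only, so the curvature of the semi-symmetric connection is
   computed from its coefficients on coordinate fields, which are explicit in
   [U = phi'/phi].  The Ricci tensor is diagonal, and since the [p_i] are not all
   equal its [F_i]-components force [U' = 2U - zeta U^2] and [zeta U = 2 + lambda];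
   the [t]-component then gives [eta U^2 = lambda^2 + 2 lambda + 2 > 0].  So [U^2] is
   constant, hence [U' = 0], which forces [zeta U = 2], [lambda = 0], [2 eta = zeta^2],
   and [phi'/phi = 2/zeta] integrates to the exponential. *)

(* Vector fields whose components depend only on [t = x 0]; [X c t] is the [c]-th one. *)
Definition TVF := nat -> R -> R.

Definition lift (X : TVF) : VF := fun x c => X c (x 0%nat).

Definition gc_t phi p (a b : nat) (s : R) : R := gc phi p a b (fun _ => s).
Definition gm_t phi p (u v : nat -> R) (s : R) : R := gm phi p u v (fun _ => s).
Definition P_t : TVF := fun c s => Pf (fun _ => s) c.
Definition coord_t (a : nat) : TVF := fun c s => coord a (fun _ => s) c.
Definition frame_t phi p (k : nat) : TVF := fun c s => frame phi p k (fun _ => s) c.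

Definition pd_gc_t phi p (a b c : nat) (s : R) : R :=
  if Nat.eqb a 0 then Derive (gc_t phi p b c) s else 0.

Definition Gamma_t phi p (c a b : nat) (s : R) : R :=
  / (2 * gc_t phi p c c s) *
  (pd_gc_t phi p a b c s + pd_gc_t phi p b a c s - pd_gc_t phi p c a b s).

Definition nablabar_t phi p (X W : TVF) : TVF := fun c s =>
  (X 0%nat s * Derive (W c) s +
   sum4 (fun a => sum4 (fun b => Gamma_t phi p c a b s * X a s * W b s)))
  + gm_t phi p (fun d => W d s) (fun d => P_t d s) s * X c s
  - gm_t phi p (fun d => X d s) (fun d => W d s) s * P_t c s.

Definition bracket_t (X Y : TVF) : TVF := fun c s =>
  X 0%nat s * Derive (Y c) s - Y 0%nat s * Derive (X c) s.

Definition curv_t phi p (X Y Z : TVF) : TVF := fun c s =>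
  nablabar_t phi p X (nablabar_t phi p Y Z) c s
  - nablabar_t phi p Y (nablabar_t phi p X Z) c s
  - nablabar_t phi p (bracket_t X Y) Z c s.

Definition Ricbar_t phi p (X Y : TVF) (s : R) : R :=
  sum4 (fun k => epsk phi p k (fun _ => s) *
     gm_t phi p (fun c => curv_t phi p X (frame_t phi p k) Y c s)
                (fun c => frame_t phi p k c s) s).

Lemma pd_lift (a : nat) (v : R -> R) (x : Pt) :
  pd a (fun y => v (y 0%nat)) x = if Nat.eqb a 0 then Derive v (x 0%nat) else 0.
Proof. unfold pd; destruct a; simpl; [reflexivity | apply Derive_const]. Qed.

Lemma nablabar_lift phi p X W :
  nablabar phi p (lift X) (lift W) = lift (nablabar_t phi p X W).
Proof.
  apply functional_extensionality; intro y; apply functional_extensionality; intro c.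
  unfold nablabar, nablaLC, lift, nablabar_t, Gamma, Gamma_t, pd_gc_t, sum4.
  assert (gc_lift : forall a b c,
    pd a (gc phi p b c) y = if Nat.eqb a 0 then Derive (gc_t phi p b c) (y 0%nat) else 0)
    by (intros; exact (pd_lift _ (gc_t phi p _ _) y)).
  cbn [sum_f_R0]; rewrite !gc_lift, !(pd_lift _ (W c) y).
  unfold gm_t, gm, gc_t, gc, P_t, Pf; simpl; ring.
Qed.

Lemma bracket_lift X Y : bracket (lift X) (lift Y) = lift (bracket_t X Y).
Proof.
  apply functional_extensionality; intro y; apply functional_extensionality; intro c.
  unfold bracket, lift, bracket_t, sum4; cbn [sum_f_R0].
  rewrite !(pd_lift _ (Y c) y), !(pd_lift _ (X c) y); simpl; ring.
Qed.

Lemma curv_lift phi p X Y Z :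
  curv phi p (lift X) (lift Y) (lift Z) = lift (curv_t phi p X Y Z).
Proof. unfold curv; rewrite !nablabar_lift, bracket_lift, !nablabar_lift; reflexivity. Qed.

Lemma Ricbar_coord phi p i j x :
  Ricbar phi p (coord i) (coord j) x = Ricbar_t phi p (coord_t i) (coord_t j) (x 0%nat).
Proof.
  unfold Ricbar, Ricbar_t.
  change (coord i) with (lift (coord_t i)); change (coord j) with (lift (coord_t j)).
  change (frame phi p) with (fun k => lift (frame_t phi p k)); cbv beta.
  f_equal; apply functional_extensionality; intro k; rewrite !curv_lift; reflexivity.
Qed.

Definition logder (phi : R -> R) (s : R) : R := Derive phi s / phi s.
Definition warp (phi : R -> R) (p : nat -> R) (a : nat) (s : R) : R :=
  Rpower (phi s) (2 * p a).

(* [nablabar_(d_a) d_b = sum_c nablabar_coef a b c d_c]: the warped-product Christoffel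
   symbols corrected by [pi(Y) X - g(X, Y) P], where [pi(d_t) = -1]. *)
Definition nablabar_coef phi p (a b c : nat) (s : R) : R :=
  match a, b with
  | O, O => 0
  | O, S _ => if Nat.eqb c b then p b * logder phi s else 0
  | S _, O => if Nat.eqb c a then p a * logder phi s - 1 else 0
  | S _, S _ =>
      if andb (Nat.eqb a b) (Nat.eqb c 0) then warp phi p a s * (p a * logder phi s - 1)
      else 0
  end.

Lemma Rpower_pos x q : 0 < Rpower x q.
Proof. apply exp_pos. Qed.

Lemma Derive_Rpower_comp phi q s : 0 < phi s -> ex_derive phi s ->
  Derive (fun s => Rpower (phi s) q) s = q * logder phi s * Rpower (phi s) q.
Proof.
  intros Hpos Hder; apply is_derive_unique; unfold Rpower, logder.
  auto_derive; [repeat split; auto | unfold Rdiv; rewrite Rmult_1_l; reflexivity].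
Qed.

Lemma nablabar_t_linear_l phi p X W c s : (c < 4)%nat ->
  nablabar_t phi p X W c s = sum4 (fun a => X a s * nablabar_t phi p (coord_t a) W c s).
Proof.
  intros Hc; destruct c as [|[|[|[|c]]]]; try lia;
  unfold nablabar_t, gm_t, gm, sum4, coord_t, coord, P_t, Pf, gc_t, gc; simpl; ring.
Qed.

Lemma nablabar_t_frame_l phi p k W c s : (k < 4)%nat -> (c < 4)%nat ->
  nablabar_t phi p (frame_t phi p k) W c s =
  frame_t phi p k k s * nablabar_t phi p (coord_t k) W c s.
Proof.
  intros Hk Hc; rewrite nablabar_t_linear_l by auto.
  destruct k as [|[|[|[|k]]]]; try lia; unfold sum4, frame_t, frame; simpl; ring.
Qed.

Section PointwiseConnection.

Variables (phi : R -> R) (p : nat -> R) (s : R).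
Hypotheses (phi_pos : 0 < phi s) (phi_der : ex_derive phi s).

Lemma nablabar_t_coord_l i W c : (i < 4)%nat -> (c < 4)%nat ->
  nablabar_t phi p (coord_t i) W c s =
  (if Nat.eqb i 0 then Derive (W c) s else 0)
  + sum4 (fun b => W b s * nablabar_coef phi p i b c s).
Proof.
  intros Hi Hc.
  pose proof (Rpower_pos (phi s) (2 * p 1%nat)).
  pose proof (Rpower_pos (phi s) (2 * p 2%nat)).
  pose proof (Rpower_pos (phi s) (2 * p 3%nat)).
  destruct i as [|[|[|[|i]]]]; try lia; destruct c as [|[|[|[|c]]]]; try lia;
  unfold nablabar_t, Gamma_t, pd_gc_t, gm_t, gm, sum4, coord_t, coord, P_t, Pf,
    gc_t, gc, nablabar_coef, warp; simpl;
  rewrite ?Derive_const, ?Derive_Rpower_comp by auto; field; lra.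
Qed.

Lemma nablabar_t_coord_coord i j c : (i < 4)%nat -> (j < 4)%nat -> (c < 4)%nat ->
  nablabar_t phi p (coord_t i) (coord_t j) c s = nablabar_coef phi p i j c s.
Proof.
  intros Hi Hj Hc; rewrite nablabar_t_coord_l by auto.
  unfold coord_t, coord; rewrite Derive_const.
  destruct j as [|[|[|[|j]]]]; try lia; unfold sum4; simpl; destruct (Nat.eqb i 0); ring.
Qed.

Lemma nablabar_t_frame_coord k j c : (k < 4)%nat -> (j < 4)%nat -> (c < 4)%nat ->
  nablabar_t phi p (frame_t phi p k) (coord_t j) c s =
  frame_t phi p k k s * nablabar_coef phi p k j c s.
Proof.
  intros; rewrite nablabar_t_frame_l, nablabar_t_coord_coord by auto; reflexivity.
Qed.

End PointwiseConnection.

Definition Dnablabar_coef phi p (a b c : nat) (t : R) : R :=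
  match a, b with
  | O, O => 0
  | O, S _ => if Nat.eqb c b then p b * Derive (logder phi) t else 0
  | S _, O => if Nat.eqb c a then p a * Derive (logder phi) t else 0
  | S _, S _ =>
      if andb (Nat.eqb a b) (Nat.eqb c 0) then
        2 * p a * logder phi t * warp phi p a t * (p a * logder phi t - 1)
        + warp phi p a t * (p a * Derive (logder phi) t)
      else 0
  end.

Section DerivedConnection.

Variables (phi : R -> R) (p : nat -> R) (t : R).
Hypotheses (phi_pos : 0 < phi t) (phi_der : ex_derive phi t)
  (phi_der2 : ex_derive (Derive phi) t).

Lemma ex_derive_logder : ex_derive (logder phi) t.
Proof. unfold logder; auto_derive; repeat split; auto; lra. Qed.

Lemma ex_derive_warp a : ex_derive (warp phi p a) t.
Proof. unfold warp, Rpower; auto_derive; repeat split; auto. Qed.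

Lemma Derive_warp a : Derive (warp phi p a) t = 2 * p a * logder phi t * warp phi p a t.
Proof. apply Derive_Rpower_comp; auto. Qed.

Lemma is_derive_nablabar_coef a b c :
  is_derive (nablabar_coef phi p a b c) t (Dnablabar_coef phi p a b c t).
Proof.
  pose proof ex_derive_logder as Hl.
  pose proof ex_derive_warp as Hw.
  pose proof Derive_warp as Dw.
  destruct a as [|a]; destruct b as [|b]; unfold nablabar_coef, Dnablabar_coef;
  repeat match goal with |- context [if ?x then _ else _] => destruct x end;
  try apply is_derive_const;
  auto_derive; repeat split; auto;
  try change (fun x : R => logder phi x) with (logder phi);
  try rewrite Dw; ring.
Qed.

End DerivedConnection.

(* The [c]-component of [Rbar(d_i, d_k) d_j]; coordinate brackets vanish. *)
Definition curv_coef phi p (i k j c : nat) (t : R) : R :=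
  (if Nat.eqb i 0 then Dnablabar_coef phi p k j c t else 0)
  + sum4 (fun b => nablabar_coef phi p k j b t * nablabar_coef phi p i b c t)
  - (if Nat.eqb k 0 then Dnablabar_coef phi p i j c t else 0)
  - sum4 (fun b => nablabar_coef phi p i j b t * nablabar_coef phi p k b c t).

Lemma frame_t_00 phi p s : frame_t phi p 0%nat 0%nat s = 1.
Proof.
  unfold frame_t, frame, gc; simpl.
  replace (Rabs (-1)) with 1 by (rewrite Rabs_left; lra).
  rewrite sqrt_1; apply Rinv_1.
Qed.

Lemma frame_t_offdiag phi p k a s : a <> k -> frame_t phi p k a s = 0.
Proof. intros H; unfold frame_t, frame; rewrite (proj2 (Nat.eqb_neq a k) H); reflexivity. Qed.

Lemma Derive_frame_t_offdiag phi p k a s : a <> k -> Derive (frame_t phi p k a) s = 0.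
Proof.
  intros H; unfold frame_t, frame; rewrite (proj2 (Nat.eqb_neq a k) H); apply Derive_const.
Qed.

Lemma ex_derive_frame_t phi p k t : 0 < phi t -> ex_derive phi t ->
  ex_derive (frame_t phi p k k) t.
Proof.
  intros Hpos Hder; unfold frame_t, frame, gc; rewrite Nat.eqb_refl.
  destruct k as [|k]; simpl; [apply ex_derive_const|].
  pose proof (exp_pos (2 * p (S k) * ln (phi t))).
  unfold Rpower; auto_derive; repeat split; auto.
  - lra.
  - apply Rabs_pos_lt; lra.
  - apply Rgt_not_eq, sqrt_lt_R0, Rabs_pos_lt; lra.
Qed.

Lemma frame_t_normalized phi p k s :
  (gc_t phi p k k s * frame_t phi p k k s ^ 2) ^ 2 = 1.
Proof.
  unfold gc_t, frame_t, frame, gc; rewrite Nat.eqb_refl; destruct k as [|k]; simpl.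
  - replace (Rabs (-1)) with 1 by (rewrite Rabs_left; lra); rewrite sqrt_1; field.
  - pose proof (Rpower_pos (phi s) (2 * p (S k))) as G.
    rewrite Rabs_pos_eq by lra.
    pose proof (sqrt_lt_R0 _ G) as r_pos.
    pose proof (sqrt_sqrt _ (Rlt_le _ _ G)) as r_sq.
    set (r := sqrt _) in *; rewrite <- r_sq; field; lra.
Qed.

Lemma gm_t_frame_r phi p k u s : (k < 4)%nat ->
  gm_t phi p u (fun c => frame_t phi p k c s) s = gc_t phi p k k s * u k * frame_t phi p k k s.
Proof.
  intros Hk; unfold gm_t, gm, sum4; cbn [sum_f_R0].
  destruct k as [|[|[|[|k]]]]; try lia;
  repeat match goal with |- context [frame_t ?phi ?p ?k ?a ?t] =>
     rewrite (frame_t_offdiag phi p k a t) by lia end;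
  unfold gc_t, gc; simpl; ring.
Qed.

Definition Ric_coef phi p (i j : nat) (t : R) : R :=
  let U := logder phi t in
  let dU := Derive (logder phi) t in
  let z := p 1%nat + p 2%nat + p 3%nat in
  match i, j with
  | O, O => (p 1%nat * dU + p 1%nat ^ 2 * U ^ 2 - p 1%nat * U)
          + (p 2%nat * dU + p 2%nat ^ 2 * U ^ 2 - p 2%nat * U)
          + (p 3%nat * dU + p 3%nat ^ 2 * U ^ 2 - p 3%nat * U)
  | S _, S _ =>
      if Nat.eqb i j then
        - warp phi p i t * (p i * dU + p i * z * U ^ 2 - 2 * p i * U - z * U + 2)
      else 0
  | _, _ => 0
  end.

Lemma sum4_ext (f g : nat -> R) : (forall k, (k < 4)%nat -> f k = g k) -> sum4 f = sum4 g.
Proof. intros H; unfold sum4; simpl; rewrite !H by lia; reflexivity. Qed.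

Section Curvature.

Variables (phi : R -> R) (p : nat -> R) (t : R).
Hypotheses (phi_regular : locally t (fun s => 0 < phi s /\ ex_derive phi s))
  (phi_der2 : ex_derive (Derive phi) t).

Let phi_pos : 0 < phi t := proj1 (locally_singleton _ _ phi_regular).
Let phi_der : ex_derive phi t := proj2 (locally_singleton _ _ phi_regular).

Lemma Derive_nablabar_t_coord_coord i j c : (i < 4)%nat -> (j < 4)%nat -> (c < 4)%nat ->
  Derive (nablabar_t phi p (coord_t i) (coord_t j) c) t = Dnablabar_coef phi p i j c t.
Proof.
  intros Hi Hj Hc.
  rewrite (Derive_ext_loc _ (nablabar_coef phi p i j c)).
  - apply is_derive_unique, is_derive_nablabar_coef; auto.
  - eapply filter_imp; [|exact phi_regular]; intros s [Hs1 Hs2].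
    apply nablabar_t_coord_coord; auto.
Qed.

Lemma Derive_nablabar_t_frame_coord k j c : (k < 4)%nat -> (j < 4)%nat -> (c < 4)%nat ->
  Derive (nablabar_t phi p (frame_t phi p k) (coord_t j) c) t =
  Derive (frame_t phi p k k) t * nablabar_coef phi p k j c t
  + frame_t phi p k k t * Dnablabar_coef phi p k j c t.
Proof.
  intros Hk Hj Hc.
  rewrite (Derive_ext_loc _ (fun s => frame_t phi p k k s * nablabar_coef phi p k j c s)).
  - pose proof (is_derive_nablabar_coef phi p t phi_pos phi_der phi_der2 k j c) as D.
    rewrite Derive_mult, (is_derive_unique _ _ _ D);
      [reflexivity | apply ex_derive_frame_t; auto | eexists; exact D].
  - eapply filter_imp; [|exact phi_regular]; intros s [Hs1 Hs2].
    apply nablabar_t_frame_coord; auto.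
Qed.

(* [R(d_i, E_k) d_j = f_k R(d_i, d_k) d_j] where [E_k = f_k d_k]: the terms in the
   derivative of [f_k] cancel against the bracket [[d_i, E_k] = (d_i f_k) d_k]. *)
Lemma curv_t_coord_frame_coord i k j c :
  (i < 4)%nat -> (k < 4)%nat -> (j < 4)%nat -> (c < 4)%nat ->
  curv_t phi p (coord_t i) (frame_t phi p k) (coord_t j) c t =
  frame_t phi p k k t * curv_coef phi p i k j c t.
Proof.
  intros Hi Hk Hj Hc; unfold curv_t.
  rewrite (nablabar_t_coord_l phi p t phi_pos phi_der i _ c),
    (nablabar_t_frame_l phi p k _ c t),
    (nablabar_t_coord_l phi p t phi_pos phi_der k _ c),
    (nablabar_t_linear_l phi p (bracket_t _ _) (coord_t j) c t) by auto.
  rewrite Derive_nablabar_t_frame_coord, Derive_nablabar_t_coord_coord by auto.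
  unfold sum4; cbn [sum_f_R0].
  rewrite !(nablabar_t_frame_coord phi p t phi_pos phi_der k j) by lia.
  rewrite !(nablabar_t_coord_coord phi p t phi_pos phi_der i j) by lia.
  rewrite !(nablabar_t_coord_coord phi p t phi_pos phi_der _ j c) by lia.
  unfold bracket_t, curv_coef, sum4; cbn [sum_f_R0].
  unfold coord_t, coord; rewrite !Derive_const.
  destruct k as [|[|[|[|k]]]]; try lia;
  repeat match goal with |- context [Derive (frame_t ?phi ?p ?k ?a) ?t] =>
     rewrite (Derive_frame_t_offdiag phi p k a t) by lia end;
  repeat match goal with |- context [frame_t ?phi ?p ?k ?a ?t] =>
     rewrite (frame_t_offdiag phi p k a t) by lia end;
  rewrite ?frame_t_00;
  destruct i as [|[|[|[|i]]]]; try lia; cbn [Nat.eqb]; ring.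
Qed.

Lemma Ricbar_t_term i k j :
  (i < 4)%nat -> (k < 4)%nat -> (j < 4)%nat ->
  epsk phi p k (fun _ => t) *
  gm_t phi p (fun c => curv_t phi p (coord_t i) (frame_t phi p k) (coord_t j) c t)
    (fun c => frame_t phi p k c t) t = curv_coef phi p i k j k t.
Proof.
  intros Hi Hk Hj.
  change (epsk phi p k (fun _ => t))
    with (gm_t phi p (fun c => frame_t phi p k c t) (fun c => frame_t phi p k c t) t).
  rewrite !gm_t_frame_r, curv_t_coord_frame_coord by auto.
  transitivity ((gc_t phi p k k t * frame_t phi p k k t ^ 2) ^ 2 * curv_coef phi p i k j k t);
    [ring | rewrite frame_t_normalized; ring].
Qed.

Lemma Ricbar_t_coord i j :
  (i < 4)%nat -> (j < 4)%nat ->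
  Ricbar_t phi p (coord_t i) (coord_t j) t = Ric_coef phi p i j t.
Proof.
  intros Hi Hj; unfold Ricbar_t.
  transitivity (sum4 (fun k => curv_coef phi p i k j k t)).
  - apply sum4_ext; intros k Hk; apply Ricbar_t_term; auto.
  - destruct i as [|[|[|[|i]]]]; try lia; destruct j as [|[|[|[|j]]]]; try lia;
    unfold curv_coef, sum4, nablabar_coef, Dnablabar_coef, Ric_coef; simpl; ring.
Qed.

End Curvature.

Lemma inI_locally (a b : Rbar) t : inI a b t -> locally t (inI a b).
Proof.
  apply (locally_open (fun u : R => Rbar_lt a u /\ Rbar_lt u b)); [|auto].
  apply open_and; [apply open_Rbar_gt | apply open_Rbar_lt].
Qed.

Lemma inI_nonempty (a b : Rbar) : Rbar_lt a b -> exists t, inI a b t.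
Proof.
  unfold inI; destruct a as [a| |], b as [b| |]; simpl; intros H; try contradiction.
  - exists ((a + b) / 2); simpl; split; lra.
  - exists (a + 1); simpl; split; [lra | exact I].
  - exists (b - 1); simpl; split; [exact I | lra].
  - exists 0; simpl; split; exact I.
Qed.

Lemma inI_between (a b : Rbar) x y z :
  inI a b x -> inI a b y -> Rmin x y <= z <= Rmax x y -> inI a b z.
Proof.
  unfold Rmin, Rmax; intros [Hax Hxb] [Hay Hyb] Hz.
  split; [destruct a | destruct b]; simpl in *; auto; destruct (Rle_dec x y); lra.
Qed.

Lemma Einstein_iff_Ric_coef (a b : Rbar) phi p lambda :
  (forall t, inI a b t -> 0 < phi t) ->
  (forall (n : nat) t, inI a b t -> ex_derive_n phi n t) ->
  Einstein a b phi p lambda <->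
  (forall t, inI a b t -> forall i j, (i < 4)%nat -> (j < 4)%nat ->
     Ric_coef phi p i j t = lambda * gc_t phi p i j t).
Proof.
  intros Hpos Hd.
  assert (Ric : forall t, inI a b t -> forall i j, (i < 4)%nat -> (j < 4)%nat ->
            Ricbar_t phi p (coord_t i) (coord_t j) t = Ric_coef phi p i j t).
  { intros t Ht i j Hi Hj; apply Ricbar_t_coord; auto; [|exact (Hd 2%nat t Ht)].
    eapply filter_imp; [|exact (inI_locally a b t Ht)].
    intros s Hs; split; [apply Hpos; auto | exact (Hd 1%nat s Hs)]. }
  split.
  - intros HE t Ht i j Hi Hj; rewrite <- Ric by auto.
    specialize (HE (fun _ => t) Ht i j Hi Hj); rewrite Ricbar_coord in HE; exact HE.
  - intros HE x Hx i j Hi Hj; rewrite Ricbar_coord, Ric by auto; apply HE; auto.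
Qed.

(* The Einstein equations in [U = phi'/phi], with [z = zeta] and [e = eta]. *)
Definition Einstein_system (z e lambda U dU : R) : Prop :=
  dU = 2 * U - z * U ^ 2 /\ z * U = 2 + lambda /\
  e * U ^ 2 = lambda ^ 2 + 2 * lambda + 2.

Lemma Einstein_system_iff p1 p2 p3 lambda U dU : ~ (p1 = p2 /\ p2 = p3) ->
  ((p1 + p2 + p3) * dU + (p1 ^ 2 + p2 ^ 2 + p3 ^ 2) * U ^ 2 - (p1 + p2 + p3) * U = - lambda /\
   p1 * (dU + (p1 + p2 + p3) * U ^ 2 - 2 * U) - (p1 + p2 + p3) * U + 2 = - lambda /\
   p2 * (dU + (p1 + p2 + p3) * U ^ 2 - 2 * U) - (p1 + p2 + p3) * U + 2 = - lambda /\
   p3 * (dU + (p1 + p2 + p3) * U ^ 2 - 2 * U) - (p1 + p2 + p3) * U + 2 = - lambda) <->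
  Einstein_system (p1 + p2 + p3) (p1 ^ 2 + p2 ^ 2 + p3 ^ 2) lambda U dU.
Proof.
  intros Hp; set (z := p1 + p2 + p3); unfold Einstein_system.
  split.
  - intros (E0 & E1 & E2 & E3).
    set (Q := dU + z * U ^ 2 - 2 * U) in *.
    assert (Q = 0) as HQ.
    { destruct (Req_dec Q 0) as [|HQ]; [assumption|]; exfalso; apply Hp; split;
        apply (Rmult_eq_reg_r Q); lra. }
    rewrite HQ in E1; assert (z * U = 2 + lambda) as E1' by lra.
    split; [unfold Q in HQ; lra|]; split; [exact E1'|].
    assert (z * dU = 2 * (z * U) - (z * U) ^ 2) as ZdU
      by (replace dU with (2 * U - z * U ^ 2) by (unfold Q in HQ; lra); ring).
    rewrite E1' in ZdU; nra.
  - intros (HdU & HzU & HeU).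
    assert (z * dU = 2 * (z * U) - (z * U) ^ 2) as ZdU by (rewrite HdU; ring).
    rewrite HzU in ZdU.
    replace (dU + z * U ^ 2 - 2 * U) with 0 by lra.
    repeat split; nra.
Qed.

Lemma Ric_coef_Einstein_iff phi p1 p2 p3 lambda t : ~ (p1 = p2 /\ p2 = p3) ->
  (forall i j, (i < 4)%nat -> (j < 4)%nat ->
     Ric_coef phi (pvec p1 p2 p3) i j t = lambda * gc_t phi (pvec p1 p2 p3) i j t) <->
  Einstein_system (p1 + p2 + p3) (p1 ^ 2 + p2 ^ 2 + p3 ^ 2) lambda
    (logder phi t) (Derive (logder phi) t).
Proof.
  intros Hp; rewrite <- Einstein_system_iff by exact Hp.
  pose proof (Rpower_pos (phi t) (2 * p1)) as G1.
  pose proof (Rpower_pos (phi t) (2 * p2)) as G2.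
  pose proof (Rpower_pos (phi t) (2 * p3)) as G3.
  unfold Ric_coef, gc_t, gc, warp; simpl.
  set (U := logder phi t); set (dU := Derive (logder phi) t).
  split.
  - intros H.
    pose proof (H 0%nat 0%nat ltac:(lia) ltac:(lia)) as E0.
    pose proof (H 1%nat 1%nat ltac:(lia) ltac:(lia)) as E1.
    pose proof (H 2%nat 2%nat ltac:(lia) ltac:(lia)) as E2.
    pose proof (H 3%nat 3%nat ltac:(lia) ltac:(lia)) as E3.
    simpl in E0, E1, E2, E3.
    repeat split;
      [ lra
      | apply (Rmult_eq_reg_l (Rpower (phi t) (2 * p1)))
      | apply (Rmult_eq_reg_l (Rpower (phi t) (2 * p2)))
      | apply (Rmult_eq_reg_l (Rpower (phi t) (2 * p3))) ]; lra.
  - intros (E0 & E1 & E2 & E3) i j Hi Hj.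
    destruct i as [|[|[|[|i]]]]; try lia; destruct j as [|[|[|[|j]]]]; try lia;
    simpl; nra.
Qed.

Lemma Derive_const_on (a b : Rbar) (f : R -> R) c t :
  (forall s, inI a b s -> f s = c) -> inI a b t -> Derive f t = 0.
Proof.
  intros Hf Ht; rewrite (Derive_ext_loc _ (fun _ => c)); [apply Derive_const|].
  eapply filter_imp; [|exact (inI_locally a b t Ht)]; exact Hf.
Qed.

Lemma exp_ode_solution (a b : Rbar) (phi : R -> R) (k t0 : R) :
  (forall t, inI a b t -> is_derive phi t (k * phi t)) -> inI a b t0 ->
  forall t, inI a b t -> phi t = phi t0 * exp (- k * t0) * exp (k * t).
Proof.
  intros Hd Ht0 t Ht.
  set (psi := fun s => phi s * exp (- k * s)).
  assert (Dpsi : forall s, inI a b s -> is_derive psi s 0).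
  { intros s Hs; unfold psi; auto_derive; [eexists; apply Hd; auto|].
    change (fun x => phi x) with phi; rewrite (is_derive_unique _ _ _ (Hd s Hs)); ring. }
  destruct (MVT_gen psi t0 t (fun _ => 0)) as [c [_ Hc]].
  - intros x Hx; apply Dpsi, (inI_between a b t0 t); auto; lra.
  - intros x Hx; apply derivable_continuous_pt; exists 0.
    apply is_derive_Reals, Dpsi, (inI_between a b t0 t); auto.
  - assert (phi t * exp (- k * t) = phi t0 * exp (- k * t0)) as E by (unfold psi in Hc; lra).
    rewrite <- E, Rmult_assoc, <- exp_plus.
    replace (- k * t + k * t) with 0 by ring; rewrite exp_0; ring.
Qed.

Lemma Einstein_system_at_rest z e lambda U :
  Einstein_system z e lambda U 0 <-> lambda = 0 /\ 2 * e / z ^ 2 = 1 /\ U = 2 / z.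
Proof.
  unfold Einstein_system; split.
  - intros (HdU & HzU & HeU).
    assert (U <> 0) as HU by (intros ->; nra).
    assert (z * U = 2) as Hz.
    { apply (Rmult_eq_reg_l U); [|exact HU]. nra. }
    assert (z <> 0) as Hz0 by (intros ->; lra).
    split; [lra|]; split; [|field_simplify_eq; lra].
    assert (lambda = 0) as -> by lra.
    replace z with (2 / U) by (field_simplify_eq; lra).
    field_simplify_eq; [nra | exact HU].
  - intros (-> & He & ->).
    assert (z <> 0) as Hz.
    { intros ->; rewrite pow_i, Rdiv_0_r in He by lia; lra. }
    assert (2 * e = z ^ 2) as He'.
    { apply (Rmult_eq_reg_r (/ z ^ 2)); [|apply Rinv_neq_0_compat, pow_nonzero, Hz].
      rewrite Rinv_r by (apply pow_nonzero, Hz); exact He. }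
    repeat split; field_simplify_eq; auto; nra.
Qed.

Lemma Einstein_system_solutions (a b : Rbar) z e lambda (U : R -> R) :
  Rbar_lt a b -> (forall t, inI a b t -> ex_derive U t) ->
  (forall t, inI a b t -> Einstein_system z e lambda (U t) (Derive U t)) <->
  lambda = 0 /\ 2 * e / z ^ 2 = 1 /\ (forall t, inI a b t -> U t = 2 / z).
Proof.
  intros Hab HU; destruct (inI_nonempty a b Hab) as [t0 Ht0]; split.
  - intros H.
    (* [e U^2] is the positive constant [lambda^2 + 2 lambda + 2], so [U U' = 0] with [U <> 0]. *)
    assert (Hrest : forall t, inI a b t -> Derive U t = 0).
    { intros t Ht.
      assert (Derive (fun s => e * U s ^ 2) t = 0) as Hsq.
      { apply (Derive_const_on a b _ (lambda ^ 2 + 2 * lambda + 2)); [|exact Ht].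
        intros s Hs; apply (H s Hs). }
      rewrite Derive_scal, Derive_pow in Hsq by auto; simpl in Hsq.
      replace (1 + 1) with 2 in Hsq by ring.
      destruct (H t Ht) as (_ & _ & HeU).
      apply (Rmult_eq_reg_l (e * U t ^ 2)); [|nra].
      transitivity (U t / 2 * (e * (2 * Derive U t * (U t * 1)))); [field | rewrite Hsq; ring]. }
    assert (Hall : forall t, inI a b t -> lambda = 0 /\ 2 * e / z ^ 2 = 1 /\ U t = 2 / z).
    { intros t Ht; apply Einstein_system_at_rest; rewrite <- (Hrest t Ht); auto. }
    destruct (Hall t0 Ht0) as (Hl & He & _); repeat split; auto.
    intros t Ht; apply Hall, Ht.
  - intros (Hl & He & HUc) t Ht.
    rewrite (Derive_const_on a b U (2 / z) t HUc Ht); apply Einstein_system_at_rest; auto.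
Qed.

Lemma logder_const_iff_exp (a b : Rbar) (phi : R -> R) k :
  Rbar_lt a b -> (forall t, inI a b t -> 0 < phi t) ->
  (forall t, inI a b t -> ex_derive phi t) ->
  (forall t, inI a b t -> logder phi t = k) <->
  exists c0, forall t, inI a b t -> phi t = c0 * exp (k * t).
Proof.
  intros Hab Hpos Hd; destruct (inI_nonempty a b Hab) as [t0 Ht0]; split.
  - intros Hk; exists (phi t0 * exp (- k * t0)).
    apply (exp_ode_solution a b phi k t0); [|exact Ht0].
    intros t Ht; replace (k * phi t) with (Derive phi t).
    + apply Derive_correct, Hd, Ht.
    + rewrite <- (Hk t Ht); unfold logder; field; apply Rgt_not_eq, Hpos, Ht.
  - intros [c0 Hc0] t Ht.
    pose proof (Hpos t Ht) as Hp; rewrite (Hc0 t Ht) in Hp.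
    unfold logder; rewrite (Derive_ext_loc phi (fun s => c0 * exp (k * s))), (Hc0 t Ht).
    + rewrite (is_derive_unique _ _ (c0 * (k * exp (k * t)))).
      * field; split; intros E; rewrite E in Hp; lra.
      * auto_derive; [exact I | ring].
    + eapply filter_imp; [|exact (inI_locally a b t Ht)]; exact Hc0.
Qed.

Theorem theorem4p30 (a b : Rbar) (phi : R -> R) (p1 p2 p3 : R) :
  Rbar_lt a b ->
  (forall t, inI a b t -> 0 < phi t) ->
  (forall (n : nat) t, inI a b t -> ex_derive_n phi n t) ->
  ~ (p1 = p2 /\ p2 = p3) ->
  forall lambda : R,
    Einstein a b phi (pvec p1 p2 p3) lambda <->
    (lambda = 0 /\
     2 * (p1 ^ 2 + p2 ^ 2 + p3 ^ 2) / (p1 + p2 + p3) ^ 2 = 1 /\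
     exists c0 : R, forall t, inI a b t ->
       phi t = c0 * exp (2 * t / (p1 + p2 + p3))).
Proof.
  intros Hab Hpos Hd Hp lambda.
  assert (Hd1 : forall t, inI a b t -> ex_derive phi t) by (intros t; exact (Hd 1%nat t)).
  rewrite Einstein_iff_Ric_coef by assumption.
  transitivity (forall t, inI a b t ->
    Einstein_system (p1 + p2 + p3) (p1 ^ 2 + p2 ^ 2 + p3 ^ 2) lambda
      (logder phi t) (Derive (logder phi) t)).
  { split; intros H t Ht; specialize (H t Ht); apply Ric_coef_Einstein_iff; assumption. }
  rewrite Einstein_system_solutions, (logder_const_iff_exp a b phi _ Hab Hpos Hd1).
  2: assumption.
  2: intros t Ht; apply ex_derive_logder; [apply Hpos, Ht | apply Hd1, Ht | exact (Hd 2%nat t Ht)].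
  assert (forall t, 2 / (p1 + p2 + p3) * t = 2 * t / (p1 + p2 + p3)) as Hexp
    by (intros t; unfold Rdiv; ring).
  setoid_rewrite Hexp; reflexivity.
Qed.
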